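(* Let $k$ be a field of characteristic different from $2$. Among Lie algebras over $k$ of the form $\mathfrak{n}(S,E)$ with $(S,E)$ a finite simple graph and $\dim\mathfrak{n}(S,E)=6$, there are exactly five isomorphism classes.
   Context: A finite simple graph $(S,E)$ has finite vertex set $S$ and edge set $E$ consisting of unordered pairs $\alpha\beta$ of distinct vertices. Let $V$ be the $k$-vector space with basis $S$, and let $W\subseteq \bigwedge^2 V$ be the subspace spanned by all $\alpha\wedge\beta$ with $\alpha,\beta\in S$, $\alpha\neq\beta$ and $\alpha\beta\notin E$. The Lie algebra $\mathfrak{n}(S,E)$ is the vector space $V\oplus (\bigwedge^2V)/W$ with bracket determined by $[v_1,v_2]=v_1\wedge v_2 \bmod W$ for $v_1,v_2\in V$ and $[x,y]=0$ for $x\in\mathfrak{n}(S,E)$, $y\in(\bigwedge^2V)/W$. It has dimension $|S|+|E|$. *)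

From HB Require Import structures.
From mathcomp Require Import all_boot all_order all_algebra.
Set Implicit Arguments. Unset Strict Implicit. Unset Printing Implicit Defensive.
Import GRing.Theory.
Local Open Scope ring_scope.

Record sgraph := SGraph {
  nv : nat;
  adj : rel 'I_nv;
  adj_sym : symmetric adj;
  adj_irr : irreflexive adj }.
Arguments adj : clear implicits.

(* Edges = unordered pairs {a,b} in E, represented by the ordered pair (a,b)
   with a < b. *)
Definition edge (G : sgraph) :=
  {p : 'I_(nv G) * 'I_(nv G) | ((p.1 < p.2)%N && adj G p.1 p.2)}.

Definition ndim (G : sgraph) : nat := (nv G + #|{: edge G}|)%N.

(* The underlying vector space V (+) (/\^2 V)/W of n(S,E), in coordinates:
   the first component gives the coordinates on the basis S of V, the
   second the coordinates on the basis {alpha /\ beta mod W | alpha beta in E,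
   alpha < beta} of (/\^2 V)/W. *)
Notation nlie k G :=
  ({ffun 'I_(nv G) -> k^o} * {ffun edge G -> k^o})%type.

(* The bracket: [v1 + w1, v2 + w2] = v1 /\ v2 mod W.  The coordinate of
   v1 /\ v2 on alpha /\ beta (alpha < beta) is v1_a v2_b - v1_b v2_a. *)
Definition nbr (k : fieldType) (G : sgraph) (x y : nlie k G) : nlie k G :=
  (0, [ffun p : edge G =>
         x.1 (val p).1 * y.1 (val p).2 - x.1 (val p).2 * y.1 (val p).1]).

Definition lie_iso (k : fieldType) (G H : sgraph) : Prop :=
  exists f : {linear nlie k G -> nlie k H},
    bijective f /\ forall x y, f (nbr x y) = nbr (f x) (f y).

(* The proof compares graphs with Lie algebras in both directions.
   - Graph isomorphisms induce Lie algebra isomorphisms: relabelling the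
     vertices along an adjacency-preserving bijection, and each edge
     coordinate up to the sign of the induced orientation, is linear,
     bijective and preserves the bracket (transport, graph_iso_lie_iso).
     Together with a relabelling lemma this shows that a graph is
     isomorphic to a graph given by an explicit list of edges as soon as
     its adjacency matches that list (lie_iso_graph_of).
   - Two dimensions are Lie algebra invariants: that of the derived algebra
     [n, n], which equals |E|, and that of the center, which is at most |E|
     when there is no isolated vertex and exceeds |E| otherwise.  They are
     expressed as "any m + 1 brackets (resp. central elements) are linearly
     dependent", which is visibly preserved by isomorphisms.
   The five graphs with |S| + |E| = 6 are then 6 K1, K2 + 3 K1, P3 + K1,
   2 K2 and K3.  Their numbers of edges 0, 1, 2, 2, 3 separate all of them
   except P3 + K1 and 2 K2, which the center separates.  Conversely a graph
   with |S| + |E| = 6 is sorted by its number of edges: with two edges they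
   either share a vertex or not, three edges on three vertices form a
   triangle, and four edges cannot fit on at most two vertices.  The
   argument does not use the hypothesis on the characteristic of k. *)

From HB Require Import structures.
From mathcomp Require Import all_boot all_order all_algebra zify.
From Stdlib Require Import Classical.
Set Implicit Arguments. Unset Strict Implicit. Unset Printing Implicit Defensive.
Import GRing.Theory.
Local Open Scope ring_scope.

Definition same_pair (T : eqType) (x y u v : T) : bool :=
  ((x == u) && (y == v)) || ((x == v) && (y == u)).

Lemma same_pairC (T : eqType) (x y u v : T) : same_pair x y u v = same_pair y x u v.
Proof. by rewrite /same_pair orbC; congr orb; rewrite andbC. Qed.

Lemma same_pair_inj (T U : eqType) (f : T -> U) : injective f ->
  forall x y u v, same_pair (f x) (f y) (f u) (f v) = same_pair x y u v.
Proof. by move=> f_inj x y u v; rewrite /same_pair !(inj_eq f_inj). Qed.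

Lemma same_pair_swap (T : eqType) (x y u v : T) : same_pair x y u v = same_pair x y v u.
Proof. by rewrite /same_pair orbC. Qed.

Definition sort_pair n (a b : 'I_n) : 'I_n * 'I_n :=
  if (a < b)%N then (a, b) else (b, a).

Lemma sort_pair_edge (G : sgraph) (a b : 'I_(nv G)) : adj G a b ->
  ((sort_pair a b).1 < (sort_pair a b).2)%N &&
  adj G (sort_pair a b).1 (sort_pair a b).2.
Proof.
move=> ab; have ba : adj G b a by rewrite (@adj_sym G).
have nba : b != a by apply: contraTneq ab => ->; rewrite (@adj_irr G).
rewrite /sort_pair; case: (ltnP a b) => [lt_ab|le_ba] /=; first by rewrite lt_ab ab.
by rewrite ltn_neqAle le_ba ba !andbT.
Qed.

Definition edge_of (G : sgraph) (a b : 'I_(nv G)) (ab : adj G a b) : edge G :=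
  exist _ (sort_pair a b) (sort_pair_edge ab).

Lemma edge_adj (G : sgraph) (p : edge G) : adj G (val p).1 (val p).2.
Proof. by case/andP: (valP p). Qed.

Lemma edge_lt (G : sgraph) (p : edge G) : ((val p).1 < (val p).2)%N.
Proof. by case/andP: (valP p). Qed.

Definition edge_nat (G : sgraph) (p : edge G) : nat * nat := (val (val p).1, val (val p).2).

Lemma edge_nat_inj (G : sgraph) : injective (@edge_nat G).
Proof.
move=> p q [e1 e2]; apply: val_inj.
by rewrite [val p]surjective_pairing [val q]surjective_pairing (val_inj e1) (val_inj e2).
Qed.

Lemma adj_edges (H : sgraph) x y :
  adj H x y = has (fun q : edge H => same_pair x y (val q).1 (val q).2) (enum {: edge H}).
Proof.
apply/idP/hasP => [xy | [q _]].
  exists (edge_of xy); rewrite ?mem_enum //= /sort_pair.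
  by case: ltnP => _; rewrite /same_pair !eqxx ?orbT.
case/orP=> /andP[/eqP-> /eqP->]; first exact: edge_adj.
by rewrite (@adj_sym H) edge_adj.
Qed.

(* Transport of structure along a map t of vertex sets that preserves and
   reflects adjacency: vertex coordinates are pulled back along t, and the
   coordinate on the edge {p1, p2} of H is the coordinate on the edge
   {t p1, t p2} of G, with a sign recording whether t reverses its ends. *)
Section Transport.
Variables (k : fieldType) (G H : sgraph) (t : 'I_(nv H) -> 'I_(nv G)).
Hypothesis adj_t : forall a b, adj G (t a) (t b) = adj H a b.

Definition pull_edge (p : edge H) : edge G :=
  edge_of (etrans (adj_t (val p).1 (val p).2) (edge_adj p)).

Definition edge_sign (p : edge H) : k :=
  if (t (val p).1 < t (val p).2)%N then 1 else -1.

Definition transport (x : nlie k G) : nlie k H :=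
  ([ffun j => x.1 (t j)], [ffun p => edge_sign p * x.2 (pull_edge p)]).

Lemma transport_is_linear : linear transport.
Proof.
move=> a x y; congr pair; apply/ffunP => j; rewrite !ffunE //=.
by rewrite mulrDr mulrCA.
Qed.

HB.instance Definition _ :=
  GRing.isLinear.Build k (nlie k G) (nlie k H) _ transport transport_is_linear.

Lemma transport_bracket x y : transport (nbr x y) = nbr (transport x) (transport y).
Proof.
congr pair; first by apply/ffunP => j; rewrite !ffunE.
apply/ffunP => p; rewrite !ffunE /edge_sign /pull_edge /= /sort_pair.
by case: ltnP => _; rewrite /= ?mul1r // mulN1r opprB.
Qed.
End Transport.

Lemma transportK (k : fieldType) (G H : sgraph)
    (s : 'I_(nv G) -> 'I_(nv H)) (t : 'I_(nv H) -> 'I_(nv G)) :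
  cancel s t -> cancel t s ->
  forall (adj_s : forall a b, adj H (s a) (s b) = adj G a b)
         (adj_t : forall a b, adj G (t a) (t b) = adj H a b),
  cancel (transport (k:=k) adj_t) (transport adj_s).
Proof.
move=> st ts adj_s adj_t; case=> v w; congr pair; apply/ffunP => q.
  by rewrite !ffunE st.
have lt_q := edge_lt q.
have le_q : ((val q).2 < (val q).1)%N = false by rewrite ltnNge ltnW.
rewrite !ffunE /edge_sign /=; set p := pull_edge adj_s q.
have -> : pull_edge adj_t p = q.
  apply: val_inj; rewrite /= /sort_pair /=.
  case: (ltnP (s (val q).1) (s (val q).2)) => _;
  by rewrite /= !st ?lt_q ?le_q -?surjective_pairing.
rewrite /p /= /sort_pair; case: (ltnP (s (val q).1) (s (val q).2)) => _ /=;
by rewrite !st ?lt_q ?le_q ?mul1r // !mulN1r opprK.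
Qed.

Lemma graph_iso_lie_iso (k : fieldType) (G H : sgraph)
    (s : 'I_(nv G) -> 'I_(nv H)) (t : 'I_(nv H) -> 'I_(nv G)) :
  cancel s t -> cancel t s -> (forall a b, adj H (s a) (s b) = adj G a b) ->
  lie_iso k G H.
Proof.
move=> st ts adj_s.
have adj_t a b : adj G (t a) (t b) = adj H a b by rewrite -adj_s !ts.
exists (transport (k:=k) adj_t); split; last exact: transport_bracket.
by exists (transport adj_s); apply: transportK.
Qed.

Definition graph_adj n (es : seq (nat * nat)) : rel 'I_n :=
  fun x y => (x != y) && has (fun e => same_pair (val x) (val y) e.1 e.2) es.

Lemma graph_adj_sym n es : symmetric (@graph_adj n es).
Proof.
by move=> x y; rewrite /graph_adj eq_sym; under eq_has => e do rewrite same_pairC.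
Qed.

Lemma graph_adj_irr n es : irreflexive (@graph_adj n es).
Proof. by move=> x; rewrite /graph_adj eqxx. Qed.

Definition graph_of n es : sgraph := SGraph (@graph_adj_sym n es) (@graph_adj_irr n es).

Lemma card_edge_graph_of n es :
  all (fun e => (e.1 < e.2 < n)%N) es -> uniq es -> #|{: edge (graph_of n es)}| = size es.
Proof.
move=> es_lt es_uniq.
rewrite -(size_image (@edge_nat _)) (perm_size (uniq_perm _ es_uniq _)) //.
  by rewrite map_inj_uniq ?enum_uniq //; exact: edge_nat_inj.
case=> a b; apply/imageP/idP => [[p _ ->] | e_in].
  have /andP[_ /hasP[[u v] uv_in]] := edge_adj p.
  rewrite /same_pair /= => /orP[/andP[/eqP eu /eqP ev] | /andP[/eqP eu /eqP ev]].
    by rewrite /edge_nat /= eu ev.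
  have /andP[lt_uv _] := allP es_lt _ uv_in.
  by move: (edge_lt p); rewrite eu ev ltnNge ltnW.
have /andP[lt_ab lt_bn] := allP es_lt _ e_in.
pose a' : 'I_n := Ordinal (ltn_trans lt_ab lt_bn); pose b' : 'I_n := Ordinal lt_bn.
have adj_ab : adj (graph_of n es) a' b'.
  rewrite /= /graph_adj -(inj_eq val_inj) /= neq_ltn lt_ab.
  by apply/hasP; exists (a, b); rewrite //= /same_pair !eqxx.
by exists (exist _ (a', b') (introT andP (conj lt_ab adj_ab))).
Qed.

Lemma relabel m n (E : m = n) (sq : seq 'I_m) : uniq sq ->
  exists (s : 'I_m -> 'I_n) (t : 'I_n -> 'I_m),
    [/\ cancel s t, cancel t s &
        forall x0 i, (i < size sq)%N -> val (s (nth x0 sq i)) = i].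
Proof.
move=> sq_uniq; subst n.
pose L := sq ++ [seq x <- enum 'I_m | x \notin sq].
have L_uniq : uniq L.
  rewrite cat_uniq sq_uniq filter_uniq ?enum_uniq // andbT /=.
  by apply/hasPn => x; rewrite mem_filter => /andP[].
have L_mem x : x \in L by rewrite mem_cat mem_filter mem_enum andbT orbN.
have L_size : size L = m.
  rewrite -[RHS](size_enum_ord m); apply: perm_size.
  by apply: uniq_perm => // [|x]; rewrite ?enum_uniq // L_mem mem_enum.
have index_lt x : (index x L < m)%N by rewrite -[X in (_ < X)%N]L_size index_mem.
pose s x : 'I_m := Ordinal (index_lt x).
pose t (y : 'I_m) := nth y L y.
exists s, t; split=> [x|y|x0 i lt_i]; first by rewrite /t /s /= nth_index.
  by apply: val_inj; rewrite /s /t /= index_uniq // L_size.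
have lt_iL : (i < size L)%N by rewrite size_cat (leq_trans lt_i) ?leq_addr.
have -> : nth x0 sq i = nth x0 L i by rewrite nth_cat lt_i.
by rewrite /s /= index_uniq.
Qed.

Lemma lie_iso_graph_of (k : fieldType) (H : sgraph) n es (sq : seq 'I_(nv H)) :
  nv H = n -> uniq sq -> all (fun e => (e.1 < size sq) && (e.2 < size sq))%N es ->
  (forall x0 x y,
     adj H x y = has (fun e => same_pair x y (nth x0 sq e.1) (nth x0 sq e.2)) es) ->
  lie_iso k H (graph_of n es).
Proof.
move=> E sq_uniq es_lt adjH; have [s [t [st ts s_sq]]] := relabel E sq_uniq.
apply: (@graph_iso_lie_iso k H (graph_of n es) s t st ts) => x y.
have val_s_inj : injective (val \o s).
  by apply: inj_comp; [exact: val_inj | exact: can_inj st].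
have adj_neq : adj H x y -> x != y by apply: contraTneq => ->; rewrite (@adj_irr H).
rewrite -(andb_idl adj_neq) /= /graph_adj (inj_eq (can_inj st)) (adjH x); congr andb.
apply: eq_in_has => e /(allP es_lt)/andP[e1_lt e2_lt].
by rewrite -[RHS](same_pair_inj val_s_inj) /= !s_sq.
Qed.

Lemma lie_iso_sym (k : fieldType) (G H : sgraph) : lie_iso k G H -> lie_iso k H G.
Proof.
case=> f [[g fK gK] f_br].
pose g' : {linear nlie k H -> nlie k G} :=
  HB.pack g (GRing.isLinear.Build _ _ _ _ g (can2_linear fK gK)).
exists g'; split; first by exists f.
by move=> x y; apply: (can_inj fK); rewrite f_br /= !gK.
Qed.

Lemma fst_sum (U V : nmodType) n (F : 'I_n -> U * V) : (\sum_i F i).1 = \sum_i (F i).1.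
Proof. exact: big_morph. Qed.

Lemma snd_sum (U V : nmodType) n (F : 'I_n -> U * V) : (\sum_i F i).2 = \sum_i (F i).2.
Proof. exact: big_morph. Qed.

Lemma pair_eq0 (U V : nmodType) (x : U * V) : x.1 = 0 -> x.2 = 0 -> x = 0.
Proof. by case: x => /= u v -> ->. Qed.

Definition dependent (k : fieldType) (V : lmodType k) n (vs : 'I_n -> V) : Prop :=
  exists2 c : 'I_n -> k, (exists i, c i != 0) & \sum_i c i *: vs i = 0.

Lemma dependent_linear (k : fieldType) (U V : lmodType k) n (f : {linear U -> V})
    (vs : 'I_n -> U) (ws : 'I_n -> V) :
  (forall i, f (vs i) = ws i) -> dependent vs -> dependent ws.
Proof.
move=> f_vs [c nz_c sum_c]; exists c => //.
rewrite -[RHS](linear0 f) -sum_c linear_sum.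
by apply: eq_bigr => i _; rewrite linearZ f_vs.
Qed.

Lemma independent_of_coords (k : fieldType) (V : lmodType k) n (vs : 'I_n -> V)
    (phi : 'I_n -> V -> k) :
  (forall c i, phi i (\sum_j c j *: vs j) = c i) -> ~ dependent vs.
Proof.
move=> phiP [c [i /negP nz_ci] sum_c]; apply: nz_ci.
have <- : phi i (\sum_j 0 *: vs j) = 0 by rewrite phiP.
by rewrite -(phiP c) sum_c big1 // => j _; rewrite scale0r.
Qed.

Lemma dependent_of_card (k : fieldType) (T : finType) m (ws : 'I_m.+1 -> {ffun T -> k^o}) :
  (#|T| <= m)%N -> dependent ws.
Proof.
move=> card_T; pose X := [tuple ws i | i < m.+1].
have not_free : ~~ free X.
  apply/negP; rewrite /free size_tuple => /eqP dim_X.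
  have := dimvS (subvf <<X>>%VS); rewrite dim_X dimvf /dim /= muln1.
  by move=> /leq_trans/(_ card_T); rewrite ltnn.
apply: NNPP => indep; case/negP: not_free; apply/freeP => c sum_c i.
apply: NNPP => nz_ci; apply: indep; exists c; first by exists i; apply/eqP.
by rewrite -[RHS]sum_c; apply: eq_bigr => j _; rewrite -tnth_nth tnth_mktuple.
Qed.

Section Invariants.
Variables (k : fieldType) (G : sgraph).

Definition derived_dim_le (m : nat) : Prop :=
  forall xs ys : 'I_m.+1 -> nlie k G, dependent (fun i => nbr (xs i) (ys i)).

Definition central (z : nlie k G) : Prop := forall x, nbr z x = 0.

Definition center_dim_le (m : nat) : Prop :=
  forall zs : 'I_m.+1 -> nlie k G, (forall i, central (zs i)) -> dependent zs.

Definition vert_vec (a : 'I_(nv G)) : nlie k G := ([ffun j => (j == a)%:R], 0).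

Definition edge_vec (p : edge G) : nlie k G := nbr (vert_vec (val p).1) (vert_vec (val p).2).

Lemma edge_vecE (p : edge G) : edge_vec p = (0, [ffun q => (q == p)%:R]).
Proof.
congr pair; apply/ffunP => q; rewrite !ffunE.
have [p_lt q_lt] := (edge_lt p, edge_lt q).
have -> : (((val q).2 == (val p).1)%:R * ((val q).1 == (val p).2)%:R : k) = 0.
  case: eqP => [e2|]; case: eqP => [e1|] //=; rewrite ?mul0r ?mulr0 //.
  by move: p_lt; rewrite -e1 -e2 => /ltn_trans/(_ q_lt); rewrite ltnn.
rewrite subr0 -natrM mulnb -xpair_eqE -(inj_eq val_inj) /=.
by rewrite -!surjective_pairing.
Qed.
End Invariants.

Lemma ord_inj_of_card (T : finType) n : (n <= #|T|)%N -> exists f : 'I_n -> T, injective f.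
Proof.
move=> le_n; exists (fun i => enum_val (widen_ord le_n i)).
by move=> i j /enum_val_inj /(congr1 val) /= /val_inj.
Qed.

Section Dimensions.
Variables (k : fieldType) (G : sgraph).

Lemma edge_vec_coord n (ps : 'I_n -> edge G) (c : 'I_n -> k) q :
  (\sum_j c j *: edge_vec k (ps j)).2 q = \sum_(j | ps j == q) c j.
Proof.
rewrite snd_sum sum_ffunE [RHS]big_mkcond; apply: eq_bigr => j _.
rewrite edge_vecE /= !ffunE eq_sym.
by case: (ps j == q); rewrite ?scaler0 // -[RHS]mulr1.
Qed.

Lemma edge_vec_indep n (ps : 'I_n -> edge G) : injective ps ->
  ~ dependent (fun i => edge_vec k (ps i)).
Proof.
move=> ps_inj.
apply: (@independent_of_coords k _ n _ (fun i (x : nlie k G) => x.2 (ps i))) => c i.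
by rewrite edge_vec_coord (big_pred1 i) // => j; rewrite (inj_eq ps_inj).
Qed.

(* dim [n, n] = |E|: the brackets of the ends of the edges are independent,
   and every bracket lies in the |E|-dimensional space (/\^2 V)/W. *)
Lemma derived_dim_leP m : derived_dim_le k G m <-> (#|{: edge G}| <= m)%N.
Proof.
split=> [derived_le | card_le xs ys].
  rewrite leqNgt; apply/negP => /ord_inj_of_card[ps ps_inj].
  apply: (edge_vec_indep ps_inj).
  exact: derived_le (fun i => vert_vec k (val (ps i)).1) (fun i => vert_vec k (val (ps i)).2).
have [c nz_c sum_c] := dependent_of_card (fun i => (nbr (xs i) (ys i)).2) card_le.
exists c => //; apply: pair_eq0; rewrite ?fst_sum ?snd_sum.
  by apply: big1 => i _; rewrite /= scaler0.
by rewrite -[RHS]sum_c.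
Qed.
End Dimensions.

Section Center.
Variables (k : fieldType) (G : sgraph).

Lemma central_of_fst0 (z : nlie k G) : z.1 = 0 -> central z.
Proof.
move=> z1 x; apply: pair_eq0 => //=; apply/ffunP => p.
by rewrite !ffunE z1 !ffunE !mul0r subrr.
Qed.

Lemma central_vert0 (z : nlie k G) j : (exists l, adj G j l) -> central z -> z.1 j = 0.
Proof.
case=> l jl z_central.
have nlj : l != j by apply/eqP => lj; move: jl; rewrite lj (@adj_irr G).
have := congr1 (fun x : nlie k G => x.2 (edge_of jl)) (z_central (vert_vec k l)).
rewrite /= !ffunE /= /sort_pair; case: (ltnP j l) => _ /=;
rewrite eqxx eq_sym (negbTE nlj) mulr0 mulr1 ?subr0 // sub0r.
by move=> /eqP; rewrite oppr_eq0 => /eqP.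
Qed.

(* With no isolated vertex the center is (/\^2 V)/W, of dimension |E|. *)
Lemma center_dim_le_of_card m :
  (forall j, exists l, adj G j l) -> (#|{: edge G}| <= m)%N -> center_dim_le k G m.
Proof.
move=> no_isolated card_le zs zs_central.
have [c nz_c sum_c] := dependent_of_card (fun i => (zs i).2) card_le.
exists c => //; apply: pair_eq0; rewrite ?fst_sum ?snd_sum; last by rewrite -[RHS]sum_c.
apply: big1 => i _; apply/ffunP => j; rewrite !ffunE /=.
by rewrite (central_vert0 (no_isolated j) (zs_central i)) scaler0.
Qed.

(* An isolated vertex contributes to the center on top of (/\^2 V)/W. *)
Lemma not_center_dim_le v m :
  (forall y, ~~ adj G v y) -> (m <= #|{: edge G}|)%N -> ~ center_dim_le k G m.
Proof.
move=> v_isolated /ord_inj_of_card[ps ps_inj] center_le.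
pose zs j := if unlift ord0 j is Some i then edge_vec k (ps i) else vert_vec k v.
have v_central : central (vert_vec k v).
  move=> x; apply: pair_eq0 => //=; apply/ffunP => p; rewrite !ffunE.
  have p1v : ((val p).1 == v) = false.
    by apply: contraNF (v_isolated (val p).2) => /eqP <-; exact: edge_adj.
  have p2v : ((val p).2 == v) = false.
    by apply: contraNF (v_isolated (val p).1) => /eqP <-; rewrite (@adj_sym G) edge_adj.
  by rewrite p1v p2v !mul0r subrr.
have zs_central i : central (zs i).
  by rewrite /zs; case: (unlift ord0 i) => [j|] //; apply: central_of_fst0; rewrite edge_vecE.
apply: (@independent_of_coords k _ _ zs
  (fun j x => if unlift ord0 j is Some i then x.2 (ps i) else x.1 v)); last exact: center_le.
move=> c j; rewrite big_ord_recl /zs unlift_none.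
under eq_bigr => i _ do rewrite liftK.
case: (unliftP ord0 j) => [i ->|->]; rewrite ?liftK ?unlift_none /= ffunE.
  rewrite edge_vec_coord (big_pred1 i) => [|l]; last by rewrite (inj_eq ps_inj).
  by rewrite scaler0 ffunE add0r.
rewrite !ffunE eqxx fst_sum sum_ffunE big1 ?addr0 => [|i _]; first exact: mulr1.
by rewrite edge_vecE /= scaler0 ffunE.
Qed.
End Center.

Lemma derived_dim_le_iso (k : fieldType) (G H : sgraph) m :
  lie_iso k G H -> derived_dim_le k G m -> derived_dim_le k H m.
Proof.
case=> f [[g fK gK] f_br] derived_le xs ys.
apply: (dependent_linear (f := f) _ (derived_le (g \o xs) (g \o ys))) => i.
by rewrite f_br /= !gK.
Qed.

Lemma center_dim_le_iso (k : fieldType) (G H : sgraph) m :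
  lie_iso k G H -> center_dim_le k G m -> center_dim_le k H m.
Proof.
case=> f [[g fK gK] f_br] center_le zs zs_central.
have g_central i : central (g (zs i)).
  by move=> x; apply: (can_inj fK); rewrite f_br gK zs_central !linear0.
by apply: (dependent_linear (f := f) _ (center_le _ g_central)) => i; rewrite gK.
Qed.

Lemma card_edge_iso (k : fieldType) (G H : sgraph) :
  lie_iso k G H -> #|{: edge G}| = #|{: edge H}|.
Proof.
move=> iso; apply/eqP; rewrite eqn_leq; apply/andP; split; apply/(derived_dim_leP k).
  by apply: (derived_dim_le_iso (lie_iso_sym iso)); apply/derived_dim_leP.
by apply: (derived_dim_le_iso iso); apply/derived_dim_leP.
Qed.

(* The five graphs with |S| + |E| = 6: six isolated vertices, one edge and
   three isolated vertices, a path of length two and an isolated vertex, two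
   disjoint edges, and a triangle. *)
Definition graph_data : seq (nat * seq (nat * nat)) :=
  [:: (6, [::]); (5, [:: (0, 1)]); (4, [:: (0, 1); (1, 2)]); (4, [:: (0, 1); (2, 3)]);
      (3, [:: (0, 1); (0, 2); (1, 2)])]%N.

Definition five_graphs (i : 'I_5) : sgraph :=
  graph_of (nth (0, [::]) graph_data i).1 (nth (0, [::]) graph_data i).2.

Notation P3_K1 := (graph_of 4 [:: (0, 1); (1, 2)]%N).
Notation K2_K2 := (graph_of 4 [:: (0, 1); (2, 3)]%N).
Notation K3 := (graph_of 3 [:: (0, 1); (0, 2); (1, 2)]%N).

Lemma card_edge_five (i : 'I_5) :
  #|{: edge (five_graphs i)}| = size (nth (0, [::]) graph_data i).2.
Proof. by apply: card_edge_graph_of; case: i => [[|[|[|[|[|]]]]] ?]. Qed.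

Lemma ndim_five (i : 'I_5) : ndim (five_graphs i) = 6%N.
Proof. by rewrite /ndim card_edge_five; case: i => [[|[|[|[|[|]]]]] ?]. Qed.

(* P3 + K1 and 2 K2 both have two edges, but only the former has an
   isolated vertex, which makes its center three-dimensional. *)
Lemma P3_K1_not_iso_K2_K2 (k : fieldType) : ~ lie_iso k P3_K1 K2_K2.
Proof.
move=> /lie_iso_sym/(center_dim_le_iso (m := 2)) iso.
apply: (@not_center_dim_le k P3_K1 (@Ordinal 4 3 isT) 2).
- by case=> [[|[|[|[|]]]] ?].
- by rewrite card_edge_graph_of.
apply: iso; apply: center_dim_le_of_card; last by rewrite card_edge_graph_of.
case=> [[|[|[|[|]]]] ?] //.
- by exists (@Ordinal 4 1 isT).
- by exists (@Ordinal 4 0 isT).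
- by exists (@Ordinal 4 3 isT).
- by exists (@Ordinal 4 2 isT).
Qed.

Lemma five_graphs_noniso (k : fieldType) (i j : 'I_5) :
  lie_iso k (five_graphs i) (five_graphs j) -> i = j.
Proof.
move=> iso; have := card_edge_iso iso; rewrite !card_edge_five.
case: i iso => [[|[|[|[|[|]]]]] ?]; case: j => [[|[|[|[|[|]]]]] ?] //= iso _;
  try exact: val_inj.
- by case: (P3_K1_not_iso_K2_K2 iso).
- by case: (P3_K1_not_iso_K2_K2 (lie_iso_sym iso)).
Qed.

Lemma two_pairs (T : eqType) (a b c d : T) :
  a != b -> c != d -> ~~ same_pair a b c d ->
  uniq [:: a; b; c; d] \/
  exists u m w, uniq [:: u; m; w] /\
    forall x y, same_pair x y a b || same_pair x y c d = same_pair x y u m || same_pair x y m w.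
Proof.
move=> ab cd abcd; have [ac_eq|ac] := eqVneq a c; first subst c.
  have bd : b != d by apply: contraNneq abcd => ->; rewrite /same_pair !eqxx.
  right; exists b, a, d; split; first by rewrite /= !inE !negb_or (eq_sym b) ab bd cd.
  by move=> x y; rewrite (same_pair_swap x y a b).
have [ad_eq|ad] := eqVneq a d; first subst d.
  have bc : b != c by apply: contraNneq abcd => ->; rewrite /same_pair !eqxx orbT.
  right; exists b, a, c; split; first by rewrite /= !inE !negb_or (eq_sym b) ab bc ac.
  by move=> x y; rewrite (same_pair_swap x y a b) (same_pair_swap x y c a).
have [bc_eq|bc] := eqVneq b c; first subst c.
  by right; exists a, b, d; rewrite /= !inE !negb_or ab ad cd.
have [bd_eq|bd] := eqVneq b d; first subst d.
  right; exists a, b, c; split; first by rewrite /= !inE !negb_or ab ac eq_sym cd.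
  by move=> x y; rewrite (same_pair_swap x y c b).
by left; rewrite /= !inE !negb_or ab ac ad bc bd cd.
Qed.

Lemma lt_pair3 (a b : nat) : (a < b < 3)%N -> (a, b) \in [:: (0, 1); (0, 2); (1, 2)]%N.
Proof. by case/andP; case: b => [|[|[|b]]] //; case: a => [|[|a]]. Qed.

Lemma K3_adj (u v : 'I_3) : adj K3 u v = (u != v).
Proof. by case: u => [[|[|[|]]] ?] //; case: v => [[|[|[|]]] ?]. Qed.

Lemma complete_of_card3 (H : sgraph) :
  nv H = 3%N -> #|{: edge H}| = 3%N -> forall x y, adj H x y = (x != y).
Proof.
move=> nvH cardE.
have sub : {subset [seq edge_nat q | q : edge H] <= [:: (0, 1); (0, 2); (1, 2)]%N}.
  move=> _ /imageP[q _ ->]; apply: lt_pair3.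
  by rewrite edge_lt -nvH ltn_ord.
have img_uniq : uniq [seq edge_nat q | q : edge H].
  by rewrite map_inj_uniq ?enum_uniq //; exact: edge_nat_inj.
have [_ same] := uniq_min_size img_uniq sub (eq_leq (esym (etrans (size_image _ _) cardE))).
have {}same : forall a b, (a < b < 3)%N -> exists q : edge H, edge_nat q = (a, b).
  move=> a b /lt_pair3; rewrite -same => /imageP[q _ ->]; by exists q.
have adj_lt (x y : 'I_(nv H)) : (x < y)%N -> adj H x y.
  move=> lt_xy; have [|q] := same x y; first by rewrite lt_xy -nvH ltn_ord.
  rewrite /edge_nat => -[e1 e2].
  have -> : x = (val q).1 by apply: val_inj.
  have -> : y = (val q).2 by apply: val_inj.
  exact: edge_adj.
move=> x y; case: (ltngtP x y) => [lt_xy | lt_yx | /val_inj ->].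
- by rewrite adj_lt //; apply/esym/eqP => exy; move: lt_xy; rewrite exy ltnn.
- by rewrite (@adj_sym H) adj_lt //; apply/esym/eqP => exy; move: lt_yx; rewrite exy ltnn.
- by rewrite (@adj_irr H) eqxx.
Qed.

Lemma card_edge_small (H : sgraph) : (nv H <= 2)%N -> (#|{: edge H}| <= 1)%N.
Proof.
move=> nvH; apply/card_le1_eqP => p q _ _; apply: edge_nat_inj.
have edge01 (r : edge H) : edge_nat r = (0, 1)%N.
  have := edge_lt r; have := ltn_ord (val r).2; rewrite /edge_nat.
  case: (val r) => [[a ?] [b ?]] /= b_lt a_lt; congr pair; lia.
by rewrite !edge01.
Qed.

Section Classification.
Variables (k : fieldType) (H : sgraph).

Lemma iso_no_edge : nv H = 6%N -> enum {: edge H} = [::] -> lie_iso k H (graph_of 6 [::]).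
Proof.
move=> nvH noE; apply: (lie_iso_graph_of k (sq := [::])) => // x0 x y.
by rewrite adj_edges noE.
Qed.

Lemma iso_one_edge q : nv H = 5%N -> enum {: edge H} = [:: q] ->
  lie_iso k H (graph_of 5 [:: (0, 1)]%N).
Proof.
move=> nvH oneE; apply: (lie_iso_graph_of k (sq := [:: (val q).1; (val q).2])) => //.
  by rewrite /= inE andbT; apply/eqP => eq_q; move: (edge_lt q); rewrite eq_q ltnn.
by move=> x0 x y; rewrite adj_edges oneE /= !orbF.
Qed.

Lemma iso_two_edges q1 q2 : nv H = 4%N -> enum {: edge H} = [:: q1; q2] ->
  lie_iso k H P3_K1 \/ lie_iso k H K2_K2.
Proof.
move=> nvH twoE; have := enum_uniq {: edge H}; rewrite twoE /= inE andbT => q12.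
have edge_neq (q : edge H) : (val q).1 != (val q).2.
  by apply/eqP => eq_q; move: (edge_lt q); rewrite eq_q ltnn.
have [|distinct|[u [m [w [path adj_path]]]]] :=
  @two_pairs _ (val q1).1 (val q1).2 (val q2).1 (val q2).2 (edge_neq q1) (edge_neq q2).
- apply: contra q12; rewrite /same_pair.
  case/orP=> /andP[/eqP e1 /eqP e2].
    by apply/eqP/edge_nat_inj; rewrite /edge_nat e1 e2.
  by move: (edge_lt q1) (edge_lt q2); rewrite e1 e2 => /ltn_trans lt /lt; rewrite ltnn.
- right; pose sq := [:: (val q1).1; (val q1).2; (val q2).1; (val q2).2].
  apply: (lie_iso_graph_of k (sq := sq)) => //.
  by move=> x0 x y; rewrite adj_edges twoE /= orbF.
- left; apply: (lie_iso_graph_of k (sq := [:: u; m; w])) => // x0 x y.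
  by rewrite adj_edges twoE /= orbF adj_path orbF.
Qed.

(* Three edges on three vertices: the triangle, through any relabelling. *)
Lemma iso_three_edges : nv H = 3%N -> #|{: edge H}| = 3%N -> lie_iso k H K3.
Proof.
move=> nvH cardE; have [s [t [st ts _]]] := relabel nvH (sq := [::]) isT.
apply: (@graph_iso_lie_iso k H K3 s t st ts) => x y.
by rewrite K3_adj (inj_eq (can_inj st)) complete_of_card3.
Qed.

Lemma classify : ndim H = 6%N -> exists i, lie_iso k H (five_graphs i).
Proof.
rewrite /ndim cardE; case E: (enum _) => [|q1 [|q2 [|q3 [|q4 r]]]] /= dimH.
- by exists (@Ordinal 5 0 isT); apply: iso_no_edge => //; lia.
- by exists (@Ordinal 5 1 isT); apply: (iso_one_edge (q := q1)) => //; lia.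
- have nvH : nv H = 4%N by lia.
  have [P3|K22] := iso_two_edges nvH E.
  + by exists (@Ordinal 5 2 isT).
  + by exists (@Ordinal 5 3 isT).
- exists (@Ordinal 5 4 isT); apply: iso_three_edges; first lia.
  by rewrite cardE E.
- have := @card_edge_small H; rewrite cardE E /=; lia.
Qed.
End Classification.

Theorem mainTheorem5 (k : fieldType) (hk : (2 \notin [pchar k])%N) :
  exists G : 'I_5 -> sgraph,
    (forall i, ndim (G i) = 6%N) /\
    (forall i j, lie_iso k (G i) (G j) -> i = j) /\
    (forall H : sgraph, ndim H = 6%N -> exists i, lie_iso k H (G i)).
Proof.
exists five_graphs; split; first exact: ndim_five.
split; first exact: five_graphs_noniso.
by move=> H; apply: classify.
Qed.
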